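(* Let $k$ be a commutative ring and $A$ a commutative $k$-algebra. If the homomorphism of graded $A$-algebras $\theta_{A/k}:\operatorname{gr}\operatorname{Diff}_{A/k}\to(\operatorname{Sym}\Omega_{A/k})^*_{gr}$ is surjective (hence an isomorphism), then $\operatorname{Ider}_k(A)=\operatorname{Der}_k(A)$.
   Context: $\operatorname{Diff}^{(n)}_{A/k}$: $k$-linear differential operators of order $\le n$ (order $0$ = multiplications by elements of $A$; $\varphi$ has order $\le i+1$ iff $[\varphi,a]=\varphi\circ a-a\circ\varphi$ has order $\le i$ for all $a$); $\operatorname{gr}\operatorname{Diff}_{A/k}$ is the associated graded commutative $A$-algebra, $\sigma_n$ the symbol. $(\operatorname{Sym}\Omega_{A/k})^*_{gr}=\bigoplus_n\operatorname{Hom}_A(\operatorname{Sym}^n\Omega_{A/k},A)$ with the shuffle product. $\theta_{A/k}=\bigoplus_n\theta_n$, where for $P\in\operatorname{Diff}^{(n)}_{A/k}$, $\theta_n(\sigma_n(P))$ is the $A$-linear form on $\operatorname{Sym}^n\Omega_{A/k}$ with $dx_1\cdots dx_n\mapsto\sum_{L\subset[n]}(-1)^{\sharp L}x_LP(x_{[n]\setminus L})$ ($x_L=\prod_{i\in L}x_i$); it is a well-defined injective homomorphism of graded $A$-algebras. $\operatorname{Ider}_k(A)$ is the set of $\delta\in\operatorname{Der}_k(A)$ for which there is an infinite sequence $(D_0=\mathrm{Id},D_1=\delta,D_2,\dots)$ of $k$-linear maps $A\to A$ with $D_i(xy)=\sum_{r+s=i}D_r(x)D_s(y)$ (a Hasse–Schmidt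 derivation). *)

From HB Require Import structures.
From mathcomp Require Import all_boot all_order all_algebra all_fingroup.
Set Implicit Arguments. Unset Strict Implicit. Unset Printing Implicit Defensive.
Import GRing.Theory.
Local Open Scope ring_scope.

Section Defs.
(* k : commutative ring; A : commutative k-algebra, given by its structure map f. *)
Variables (k A : comPzRingType) (f : {rmorphism k -> A}).

Definition klinear (D : A -> A) : Prop :=
  (forall x y, D (x + y) = D x + D y) /\ (forall (c : k) x, D (f c * x) = f c * D x).

Definition isDer (D : A -> A) : Prop :=
  klinear D /\ forall x y, D (x * y) = x * D y + y * D x.

Fixpoint ordLe (n : nat) (D : A -> A) : Prop :=
  match n with
  | O => exists a : A, forall x, D x = a * x
  | S m => forall a : A, ordLe m (fun x => D (a * x) - a * D x)
  end.

Definition isDiffOp (n : nat) (D : A -> A) : Prop := klinear D /\ ordLe n D.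

(* Hom_A(Sym^n Omega_{A/k}, A), written out: symmetric maps A^n -> A that are
   k-derivations in each argument (phi (x_1,..,x_n) = value on dx_1 ... dx_n). *)
Definition symMultiDer (n : nat) (phi : ('I_n -> A) -> A) : Prop :=
  (forall (i : 'I_n) (x : 'I_n -> A),
      isDer (fun t => phi (fun j => if j == i then t else x j)))
  /\ (forall (s : {perm 'I_n}) (x : 'I_n -> A), phi (fun j => x (s j)) = phi x).

(* theta_n(sigma_n(P)) evaluated at dx_1 ... dx_n *)
Definition thetaVal (n : nat) (P : A -> A) (x : 'I_n -> A) : A :=
  \sum_(L : {set 'I_n})
     (-1) ^+ #|L| * (\prod_(i in L) x i) * P (\prod_(i in ~: L) x i).

(* theta_{A/k} surjective: every element of each graded piece is theta_n(sigma_n(P)) *)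
Definition theta_surjective : Prop :=
  forall (n : nat) (phi : ('I_n -> A) -> A), symMultiDer phi ->
    exists P : A -> A, isDiffOp n P /\ forall x, phi x = thetaVal P x.

Definition isHS (D : nat -> A -> A) : Prop :=
  (forall x, D 0%N x = x) /\ (forall i, klinear (D i)) /\
  (forall (i : nat) (x y : A), D i (x * y) = \sum_(r < i.+1) D r x * D (i - r)%N y).

Definition isIder (delta : A -> A) : Prop :=
  isDer delta /\ exists D : nat -> A -> A, isHS D /\ (forall x, D 1%N x = delta x).

End Defs.

From HB Require Import structures.
From mathcomp Require Import all_boot all_order all_algebra all_fingroup.
From Stdlib Require Import FunctionalExtensionality ClassicalEpsilon.
From mathcomp Require Import ring zify.
Set Implicit Arguments. Unset Strict Implicit. Unset Printing Implicit Defensive.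
Import GRing.Theory.
Local Open Scope ring_scope.

(* A derivation [delta] is extended to a Hasse-Schmidt sequence one term at a
   time.  Given D_0 = id, D_1 = delta, ..., D_(n-1) obeying the Hasse-Schmidt
   rule, put Psi(x) = sum_(0<i<n) D_i(x) t^i and let T_m(x_1,...,x_m) be the
   coefficient of t^n in Psi(x_1)...Psi(x_m); it vanishes for m > n.  By
   descending induction on m one finds a k-linear E with theta_j(E) = T_j for
   all j > m: given such an E for m + 1, the defect T_(m+1) - theta_(m+1)(E)
   is a symmetric multi-derivation (because x + Psi(x) is multiplicative
   modulo t^n and theta_(m+2)(E) = T_(m+2)), hence, by surjectivity of
   theta, equals theta_(m+1)(P) for an operator P of order <= m+1, whose
   theta_j vanish for j > m+1; replace E by E + P.  For m = 1
   the identity theta_2(E) = T_2 says exactly that D_n := E - E(1) . obeys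
   the Hasse-Schmidt rule in degree n. *)

Section IteratedCommutators.
Variable A : comPzRingType.
Implicit Types (G H : A -> A) (a b c y : A).

Definition comm_op G a : A -> A := fun y => G (a * y) - a * G y.

Fixpoint iter_comm m G : ('I_m -> A) -> A -> A :=
  match m with
  | 0 => fun _ => G
  | m'.+1 => fun x => iter_comm (comm_op G (x ord0)) (fun j => x (lift ord0 j))
  end.

Definition fcons m c (x : 'I_m -> A) : 'I_m.+1 -> A :=
  fun i => if unlift ord0 i is Some j then x j else c.

Lemma fcons0 m c (x : 'I_m -> A) : fcons c x ord0 = c.
Proof. by rewrite /fcons unlift_none. Qed.

Lemma fcons_lift m c (x : 'I_m -> A) j : fcons c x (lift ord0 j) = x j.
Proof. by rewrite /fcons liftK. Qed.

Lemma eq_iter_comm m G H (x x' : 'I_m -> A) :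
  G =1 H -> x =1 x' -> iter_comm G x =1 iter_comm H x'.
Proof.
elim: m G H x x' => [|m IH] G H x x' eGH ex //=.
by apply: (IH _ _ _ _) => [y|j]; rewrite /comm_op ?eGH ex.
Qed.

Lemma iter_comm_fcons m G c (x : 'I_m -> A) :
  iter_comm G (fcons c x) =1 iter_comm (comm_op G c) x.
Proof.
by move=> y /=; apply: eq_iter_comm => [z|j]; rewrite ?fcons0 ?fcons_lift.
Qed.

Lemma iter_comm0 m (x : 'I_m -> A) : iter_comm (fun=> 0) x =1 (fun=> 0).
Proof.
elim: m x => [|m IH] x y //=.
apply: etrans (IH (fun j => x (lift ord0 j)) y).
by apply: eq_iter_comm => // z; rewrite /comm_op mulr0 subr0.
Qed.

Lemma iter_commD m G H (x : 'I_m -> A) y :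
  iter_comm (fun z => G z + H z) x y = iter_comm G x y + iter_comm H x y.
Proof.
elim: m G H x => [|m IH] G H x //=; rewrite -IH.
by apply: eq_iter_comm => // z; rewrite /comm_op; ring.
Qed.

Lemma iter_commZ m G b (x : 'I_m -> A) y :
  iter_comm (fun z => b * G z) x y = b * iter_comm G x y.
Proof.
elim: m G x => [|m IH] G x //=; rewrite -IH.
by apply: eq_iter_comm => // z; rewrite /comm_op; ring.
Qed.

Lemma iter_comm_ordLe m G : ordLe m G ->
  forall j (x : 'I_j -> A), (m < j)%N -> iter_comm G x =1 (fun=> 0).
Proof.
elim: m G => [|m IH] G ordG [|j] x //= ltmj y.
  have [a Ga] := ordG; rewrite -[RHS](iter_comm0 (fun j => x (lift ord0 j)) y).
  by apply: eq_iter_comm => // z; rewrite /comm_op !Ga mulrCA subrr.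
exact: (IH _ (ordG (x ord0)) _ _ ltmj y).
Qed.

Lemma iter_comm_fconsM m G a b (x : 'I_m -> A) y :
  iter_comm G (fcons (a * b) x) y =
  iter_comm G (fcons a (fcons b x)) y + b * iter_comm G (fcons a x) y
  + a * iter_comm G (fcons b x) y.
Proof.
rewrite !iter_comm_fcons -!iter_commZ -!iter_commD.
by apply: eq_iter_comm => // z; rewrite /comm_op !mulrA; ring.
Qed.

Lemma iter_comm_fconsD m G c1 c2 (x : 'I_m -> A) y : {morph G : u v / u + v} ->
  iter_comm G (fcons (c1 + c2) x) y =
  iter_comm G (fcons c1 x) y + iter_comm G (fcons c2 x) y.
Proof.
move=> GD; rewrite !iter_comm_fcons -iter_commD.
by apply: eq_iter_comm => // z; rewrite /comm_op mulrDl GD; ring.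
Qed.

Lemma iter_comm_fconsZ m G c c1 (x : 'I_m -> A) y : (forall z, G (c * z) = c * G z) ->
  iter_comm G (fcons (c * c1) x) y = c * iter_comm G (fcons c1 x) y.
Proof.
move=> GZ; rewrite !iter_comm_fcons -iter_commZ.
by apply: eq_iter_comm => // z; rewrite /comm_op -mulrA GZ; ring.
Qed.

End IteratedCommutators.

Section ThetaVal.
Variable A : comPzRingType.
Implicit Types (G : A -> A) (y : A).

Lemma ord0_notin_lift_imset m (L : {set 'I_m}) :
  (ord0 : 'I_m.+1) \in lift ord0 @: L = false.
Proof. by apply/negbTE/imsetP => -[j _ /eqP]; rewrite (negbTE (neq_lift _ _)). Qed.

Lemma lift_preim_imset m (L : {set 'I_m}) : lift ord0 @^-1: (lift ord0 @: L) = L.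
Proof. by apply/setP => j; rewrite inE mem_imset //; apply: lift_inj. Qed.

Lemma lift_preim_setU0 m (L : {set 'I_m}) :
  lift ord0 @^-1: (ord0 |: lift ord0 @: L) = L.
Proof.
apply/setP => j; rewrite !inE mem_imset; last exact: lift_inj.
by rewrite eq_sym (negbTE (neq_lift _ _)).
Qed.

Lemma prod_set_ord_recl m (x : 'I_m.+1 -> A) (S : {set 'I_m.+1}) :
  \prod_(i in S) x i = (if ord0 \in S then x ord0 else 1) *
    \prod_(j in lift ord0 @^-1: S) x (lift ord0 j).
Proof.
rewrite big_mkcond big_ord_recl /=; congr (_ * _).
by rewrite [RHS]big_mkcond; apply: eq_bigr => j _; rewrite inE.
Qed.

Lemma sum_set_ord_recl m (F : {set 'I_m.+1} -> A) :
  \sum_L F L = \sum_(L : {set 'I_m}) (F (lift ord0 @: L) + F (ord0 |: lift ord0 @: L)).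
Proof.
rewrite big_split /= [LHS](bigID (fun L : {set 'I_m.+1} => ord0 \in L)) /= addrC.
congr (_ + _).
- rewrite (reindex_onto (fun L : {set 'I_m} => lift ord0 @: L)
                       (fun L : {set 'I_m.+1} => lift ord0 @^-1: L)).
    by apply: eq_bigl => L; rewrite ord0_notin_lift_imset lift_preim_imset eqxx.
  move=> L L0; apply/setP => i; case: (unliftP ord0 i) => [j ->|->].
    by rewrite mem_imset ?inE //; apply: lift_inj.
  by rewrite ord0_notin_lift_imset (negbTE L0).
- rewrite (reindex_onto (fun L : {set 'I_m} => ord0 |: lift ord0 @: L)
                       (fun L : {set 'I_m.+1} => lift ord0 @^-1: L)).
    by apply: eq_bigl => L; rewrite lift_preim_setU0 eqxx !inE eqxx.
  move=> L L0; apply/setP => i; rewrite !inE; case: (unliftP ord0 i) => [j ->|->].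
    by rewrite mem_imset ?inE ?(negbTE (neq_lift _ _)) //; apply: lift_inj.
  by rewrite eqxx L0.
Qed.

Definition thetaVal_at m G (x : 'I_m -> A) y : A :=
  \sum_(L : {set 'I_m})
     (-1) ^+ #|L| * (\prod_(i in L) x i) * G ((\prod_(i in ~: L) x i) * y).

Lemma thetaVal_at_iter_comm m G (x : 'I_m -> A) y :
  thetaVal_at G x y = iter_comm G x y.
Proof.
elim: m G x y => [|m IH] G x y.
  rewrite /thetaVal_at /= (big_pred1 set0) => [|L]; last first.
    by apply/esym/eqP/setP => -[].
  by rewrite cards0 big_set0 !mul1r big1 ?mul1r // => -[].
rewrite /= -IH /thetaVal_at sum_set_ord_recl; apply: eq_bigr => L _.
have splitL (S : {set 'I_m.+1}) :
    (-1) ^+ #|S| * \prod_(i in S) x i * G (\prod_(i in ~: S) x i * y) =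
  ((if ord0 \in S then -1 else 1) * (-1) ^+ #|lift ord0 @^-1: S|) *
  ((if ord0 \in S then x ord0 else 1) * \prod_(j in lift ord0 @^-1: S) x (lift ord0 j)) *
  G ((if ord0 \in S then 1 else x ord0) *
     \prod_(j in ~: (lift ord0 @^-1: S)) x (lift ord0 j) * y).
  rewrite -!prodr_const (prod_set_ord_recl (fun _ => -1)) !prod_set_ord_recl.
  by rewrite preimsetC inE; case: (ord0 \in S).
rewrite !splitL ord0_notin_lift_imset lift_preim_imset !inE eqxx lift_preim_setU0 /=.
by rewrite /comm_op !mul1r !mulrA; ring.
Qed.

Lemma thetaVal_iter_comm m G (x : 'I_m -> A) : thetaVal G x = iter_comm G x 1.
Proof.
rewrite -thetaVal_at_iter_comm; apply: eq_bigr => L _; by rewrite mulr1.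
Qed.

Lemma thetaVal_perm m G (x : 'I_m -> A) (s : {perm 'I_m}) :
  thetaVal G (fun j => x (s j)) = thetaVal G x.
Proof.
have perm_prod (S : {set 'I_m}) : \prod_(i in S) x (s i) = \prod_(i in s @: S) x i.
  rewrite [RHS]big_mkcond [RHS](reindex_inj (@perm_inj _ s)) /= [LHS]big_mkcond.
  by apply: eq_bigr => i _; rewrite mem_imset //; apply: perm_inj.
rewrite /thetaVal [RHS](reindex_inj (imset_inj (@perm_inj _ s))) /=.
apply: eq_bigr => L _; rewrite card_imset; last exact: perm_inj.
rewrite !perm_prod (_ : s @: (~: L) = ~: (s @: L)) //.
by apply/setP => i; rewrite [in RHS]inE -(permKV s i) !mem_imset ?inE //; apply: perm_inj.
Qed.

End ThetaVal.

Section SymMultiDer.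
Variables (k A : comPzRingType) (f : {rmorphism k -> A}).

Lemma symMultiDer_fcons m (phi : ('I_m.+1 -> A) -> A) :
  (forall (s : {perm 'I_m.+1}) x, phi (fun j => x (s j)) = phi x) ->
  (forall x : 'I_m -> A, isDer f (fun t => phi (fcons t x))) ->
  symMultiDer f phi.
Proof.
move=> phi_perm phi_der; split => // i x.
pose s := tperm ord0 i.
suff -> : (fun t => phi (fun j => if j == i then t else x j)) =
          (fun t => phi (fcons t (fun j => x (s (lift ord0 j))))) by [].
apply: functional_extensionality => t.
rewrite -(phi_perm s); congr phi; apply: functional_extensionality => j.
rewrite /fcons; case: (unliftP ord0 j) => [j' ->|->]; last by rewrite tpermL eqxx.
rewrite -{1}(tpermL ord0 i) (inj_eq (@perm_inj _ s)).
by rewrite eq_sym (negbTE (neq_lift _ _)).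
Qed.

End SymMultiDer.

Lemma sum_ord_ends (R : nmodType) (F : nat -> R) j : (0 < j)%N ->
  \sum_(r < j.+1) F r = F 0%N + F j + \sum_(1 <= r < j) F r.
Proof.
move=> j_gt0; rewrite -(big_mkord xpredT) (big_ltn (ltn0Sn _)) big_nat_recr //=.
by rewrite [_ + F j]addrC addrA.
Qed.

Section HSUpto.
Variables (k A : comPzRingType) (f : {rmorphism k -> A}).

Definition isHS_upto n (D : nat -> A -> A) : Prop :=
  (forall x, D 0%N x = x) /\ (forall i, (i < n)%N -> klinear f (D i)) /\
  (forall i, (i < n)%N -> forall x y,
     D i (x * y) = \sum_(r < i.+1) D r x * D (i - r)%N y).

Definition hs_set (D : nat -> A -> A) n (E : A -> A) : nat -> A -> A :=
  fun i => if i == n then E else D i.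

Lemma isHS_upto_set n D E : (0 < n)%N -> isHS_upto n D -> klinear f E ->
  (forall a b, E (a * b) =
     \sum_(r < n.+1) hs_set D n E r a * hs_set D n E (n - r)%N b) ->
  isHS_upto n.+1 (hs_set D n E).
Proof.
move=> n_gt0 [D0 [Dlin Dmul]] Elin Emul; rewrite /hs_set.
split; first by move=> x; rewrite ltn_eqF.
split=> i; rewrite ltnS leq_eqVlt => /predU1P[->|ltin]; rewrite ?eqxx //.
- by rewrite ltn_eqF //; apply: Dlin.
- move=> x y; rewrite ltn_eqF // Dmul //; apply: eq_bigr => -[r ltri] _ /=.
  by rewrite !ltn_eqF //; lia.
Qed.

End HSUpto.

Lemma coefM_eq_low (R : nzRingType) (p q r : {poly R}) n :
  (forall j, (j < n)%N -> p`_j = q`_j) -> r`_0 = 0 -> (p * r)`_n = (q * r)`_n.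
Proof.
move=> eq_pq r0; rewrite !coefM !big_ord_recr /= subnn r0 !mulr0; congr (_ + _).
by apply: eq_bigr => j _; rewrite eq_pq.
Qed.

Section HSObstruction.
Variables (k A : comPzRingType) (f : {rmorphism k -> A}).
Variables (A_nontrivial : (1 : A) != 0) (n : nat) (D : nat -> A -> A).
Hypothesis hsD : isHS_upto f n D.

(* Polynomials need a nontrivial coefficient ring. *)
Definition Anz : Type := A.
HB.instance Definition _ := GRing.ComPzRing.on Anz.
HB.instance Definition _ := GRing.PzSemiRing_isNonZero.Build Anz A_nontrivial.

Definition hs_series (x : A) : {poly Anz} :=
  \poly_(i < n) ((if i == 0%N then 0 else D i x) : Anz).

Lemma coef_hs_series i x :
  (hs_series x)`_i = if (0 < i < n)%N then D i x else 0.
Proof. by rewrite coef_poly lt0n; case: (i < n)%N; case: (i == 0)%N. Qed.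

Lemma coef0_hs_series x : (hs_series x)`_0 = 0.
Proof. by rewrite coef_hs_series. Qed.

Lemma coef_hs_seriesM a b j : (j <= n)%N ->
  (hs_series a * hs_series b)`_j = \sum_(1 <= r < j) D r a * D (j - r)%N b.
Proof.
move=> le_jn; rewrite coefM.
case: (posnP j) => [->|j_gt0]; first by rewrite big_ord1 coef0_hs_series mul0r big_geq.
rewrite (sum_ord_ends (fun r => (hs_series a)`_r * (hs_series b)`_(j - r))) //.
rewrite subn0 subnn !coef0_hs_series mul0r mulr0 !add0r.
apply: eq_big_nat => r /andP[r_gt0 ltrj]; rewrite !coef_hs_series.
have -> : (0 < r < n)%N by lia.
by have -> : (0 < j - r < n)%N by lia.
Qed.

Lemma hs_seriesD a b : hs_series (a + b) = hs_series a + hs_series b.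
Proof.
apply/polyP => i; rewrite coefD !coef_hs_series.
case: ifP => [/andP[_ ltin]|_]; last by rewrite addr0.
by have [-> _] := hsD.2.1 i ltin.
Qed.

Lemma hs_seriesZ c a : hs_series (f c * a) = (f c : Anz) *: hs_series a.
Proof.
apply/polyP => i; rewrite coefZ !coef_hs_series.
case: ifP => [/andP[_ ltin]|_]; last by rewrite mulr0.
by have [_ ->] := hsD.2.1 i ltin.
Qed.

(* [a * b + hs_series (a * b) = (a + hs_series a) * (b + hs_series b)] mod t^n. *)
Lemma coef_hs_seriesM_low a b j : (j < n)%N ->
  (hs_series (a * b))`_j =
  (hs_series a * hs_series b + (a : Anz) *: hs_series b + (b : Anz) *: hs_series a)`_j.
Proof.
move=> ltjn; rewrite !coefD !coefZ coef_hs_seriesM 1?ltnW // !coef_hs_series ltjn.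
case: (posnP j) => [->|j_gt0] /=; first by rewrite big_geq // !mulr0 !addr0.
have [D0 [_ Dmul]] := hsD.
by rewrite Dmul // (sum_ord_ends (fun r => D r a * D (j - r)%N b)) // subn0 subnn !D0; ring.
Qed.

Definition hs_obstruction m (x : 'I_m -> A) : A := (\prod_(i < m) hs_series (x i))`_n.

Lemma coef_prod_hs_series_small m (x : 'I_m -> A) i : (i < m)%N ->
  (\prod_(j < m) hs_series (x j))`_i = 0.
Proof.
elim: m x i => [|m IH] x i // ltim.
rewrite big_ord_recl coefM big1 // => -[[|j] ltji] _ /=.
  by rewrite coef0_hs_series mul0r.
by rewrite IH ?mulr0 //; lia.
Qed.

Lemma hs_obstruction_eq0 m (x : 'I_m -> A) : (n < m)%N -> hs_obstruction x = 0.
Proof. exact: coef_prod_hs_series_small. Qed.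

Lemma hs_obstruction_perm m (x : 'I_m -> A) (s : {perm 'I_m}) :
  hs_obstruction (fun j => x (s j)) = hs_obstruction x.
Proof. by rewrite /hs_obstruction [in RHS](reindex_perm s). Qed.

Lemma prod_hs_series_fcons m c (x : 'I_m -> A) :
  \prod_(i < m.+1) hs_series (fcons c x i) = hs_series c * \prod_(i < m) hs_series (x i).
Proof. by rewrite big_ord_recl fcons0; under eq_bigr do rewrite fcons_lift. Qed.

Lemma hs_obstruction_fconsD m c1 c2 (x : 'I_m -> A) :
  hs_obstruction (fcons (c1 + c2) x) =
  hs_obstruction (fcons c1 x) + hs_obstruction (fcons c2 x).
Proof. by rewrite /hs_obstruction !prod_hs_series_fcons hs_seriesD mulrDl coefD. Qed.

Lemma hs_obstruction_fconsZ m c c1 (x : 'I_m -> A) :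
  hs_obstruction (fcons (f c * c1) x) = f c * hs_obstruction (fcons c1 x).
Proof. by rewrite /hs_obstruction !prod_hs_series_fcons hs_seriesZ -scalerAl coefZ. Qed.

Lemma hs_obstruction_fconsM m a b (x : 'I_m.+1 -> A) :
  hs_obstruction (fcons (a * b) x) = hs_obstruction (fcons a (fcons b x))
    + b * hs_obstruction (fcons a x) + a * hs_obstruction (fcons b x).
Proof.
rewrite /hs_obstruction !prod_hs_series_fcons.
rewrite (coefM_eq_low (coef_hs_seriesM_low a b)) ?coef_prod_hs_series_small //.
by rewrite !mulrDl !coefD -!scalerAl !coefZ mulrA; ring.
Qed.

Lemma hs_obstruction2 a b :
  hs_obstruction (fun i : 'I_2 => if i == ord0 then a else b) =
  \sum_(1 <= r < n) D r a * D (n - r)%N b.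
Proof.
by rewrite /hs_obstruction !big_ord_recl big_ord0 mulr1 coef_hs_seriesM.
Qed.

Hypothesis theta_surj : theta_surjective f.

Definition obstruction_theta_gt m := exists E, klinear f E /\
  forall j (x : 'I_j -> A), (m < j)%N -> thetaVal E x = hs_obstruction x.

Lemma obstruction_theta_gt_n : obstruction_theta_gt n.
Proof.
exists (fun=> 0); split; first by split=> *; rewrite ?addr0 ?mulr0.
by move=> j x ltnj; rewrite thetaVal_iter_comm iter_comm0 hs_obstruction_eq0.
Qed.

Lemma obstruction_theta_gt_pred m :
  obstruction_theta_gt m.+2 -> obstruction_theta_gt m.+1.
Proof.
case=> E [[ED EZ] thetaE].
pose phi (x : 'I_m.+2 -> A) := hs_obstruction x - thetaVal E x.
have phi_symder : symMultiDer f phi.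
  apply: symMultiDer_fcons => [s x|x]; first by rewrite /phi hs_obstruction_perm thetaVal_perm.
  rewrite /phi; split; [split|] => [c1 c2|c c1|a b]; rewrite !thetaVal_iter_comm.
  - by rewrite hs_obstruction_fconsD iter_comm_fconsD //; ring.
  - by rewrite hs_obstruction_fconsZ iter_comm_fconsZ //; ring.
  - have := thetaE _ (fcons a (fcons b x)) (ltnSn _).
    rewrite hs_obstruction_fconsM iter_comm_fconsM thetaVal_iter_comm => ->; ring.
have [P [[[PD PZ] ordP] thetaP]] := theta_surj phi_symder.
exists (fun y => E y + P y); split; first by split=> *; rewrite ?ED ?EZ ?PD ?PZ; ring.
move=> j x ltmj; rewrite thetaVal_iter_comm iter_commD -!thetaVal_iter_comm.
have [ltj|eqj] : (m.+2 < j)%N \/ j = m.+2 by lia.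
  by rewrite thetaE // thetaVal_iter_comm (iter_comm_ordLe ordP) // addr0.
by subst j; rewrite -thetaP /phi addrC subrK.
Qed.

Lemma obstruction_theta_gt1 : (0 < n)%N -> obstruction_theta_gt 1.
Proof.
move=> n_gt0; suff theta_gt d : (d < n)%N -> obstruction_theta_gt (n - d).
  by rewrite -(subKn n_gt0); apply: theta_gt; rewrite subn1 prednK.
elim: d => [_|d IH ltdn]; first by rewrite subn0; exact: obstruction_theta_gt_n.
have eq_nd : (n - d = (n - d.+2).+2)%N by lia.
have -> : (n - d.+1 = (n - d.+2).+1)%N by lia.
by apply: obstruction_theta_gt_pred; rewrite -eq_nd; apply: IH; lia.
Qed.

Lemma hs_extend : (0 < n)%N -> exists E, isHS_upto f n.+1 (hs_set D n E).
Proof.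
move=> n_gt0; have [E [[ED EZ] thetaE]] := obstruction_theta_gt1 n_gt0.
have [D0 _] := hsD.
(* theta_2(E)(a, b) = E(ab) - a E(b) - b E(a) + ab E(1). *)
pose Dn y := E y - y * E 1.
exists Dn; apply: isHS_upto_set => //; first by split=> *; rewrite /Dn ?ED ?EZ; ring.
move=> a b; have := thetaE 2 (fun i : 'I_2 => if i == ord0 then a else b) (ltnSn 1).
rewrite hs_obstruction2 thetaVal_iter_comm /= /comm_op !mulr1 => obstr.
rewrite (sum_ord_ends (fun r => hs_set D n Dn r a * hs_set D n Dn (n - r) b)) //.
rewrite subn0 subnn /hs_set eqxx ltn_eqF // !D0.
rewrite (eq_big_nat _ _ (F2 := fun r => D r a * D (n - r)%N b)) -?obstr /Dn; first ring.
by move=> r /andP[r_gt0 ltrn]; rewrite !ltn_eqF //; lia.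
Qed.

End HSObstruction.

Section HSSequence.
Variables (k A : comPzRingType) (f : {rmorphism k -> A}).
Variables (A_nontrivial : (1 : A) != 0) (theta_surj : theta_surjective f).
Variables (delta : A -> A) (delta_der : isDer f delta).

Definition hs_prefix m := {D : nat -> A -> A | isHS_upto f m.+2 D /\ D 1%N = delta}.

Lemma hs_prefix0_spec : isHS_upto f 2 (fun i => if i == 0%N then id else delta).
Proof.
have [[deltaD deltaZ] deltaM] := delta_der.
split=> //; split.
- by case=> [|[|i]] // _; split.
- by case=> [|[|i]] // _ x y; rewrite !big_ord_recl big_ord0 /= ?deltaM; ring.
Qed.

Definition hs_prefix0 : hs_prefix 0 :=
  exist _ (fun i => if i == 0%N then id else delta) (conj hs_prefix0_spec erefl).

Definition hs_prefix_succ m (P : hs_prefix m) : hs_prefix m.+1 :=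
  let (E, hsE) := constructive_indefinite_description _
    (hs_extend A_nontrivial (proj1 (proj2_sig P)) theta_surj (ltn0Sn m.+1)) in
  exist _ (hs_set (proj1_sig P) m.+2 E) (conj hsE (proj2 (proj2_sig P))).

Fixpoint hs_prefixes m : hs_prefix m :=
  if m is m'.+1 then hs_prefix_succ (hs_prefixes m') else hs_prefix0.

Lemma hs_prefixes_stable m d i : (i <= m.+1)%N ->
  proj1_sig (hs_prefixes (m + d)) i = proj1_sig (hs_prefixes m) i.
Proof.
move=> le_im1; elim: d => [|d IH]; first by rewrite addn0.
rewrite addnS /= /hs_prefix_succ; case: constructive_indefinite_description => E _ /=.
by rewrite /hs_set (_ : (i == (m + d).+2) = false) ?IH //; lia.
Qed.

Lemma isIder_nontrivial : isIder f delta.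
Proof.
pose D i := proj1_sig (hs_prefixes i) i.
have D_stable i j : (i <= j)%N -> proj1_sig (hs_prefixes j) i = D i.
  by move=> le_ij; rewrite -(subnKC le_ij) hs_prefixes_stable.
have hs_i i := proj1 (proj2_sig (hs_prefixes i)).
split=> //; exists D; split=> [|x]; last by rewrite /D (proj2 (proj2_sig (hs_prefixes 1))).
split=> [x|]; first by rewrite /D (proj1 (hs_i 0%N)).
split=> i; first by rewrite /D; apply: (proj1 (proj2 (hs_i i))).
move=> x y; rewrite /D (proj2 (proj2 (hs_i i))) //.
by apply: eq_bigr => r _; rewrite !D_stable // ?leq_subr // -ltnS.
Qed.

End HSSequence.

Lemma isIder_trivial (k A : comPzRingType) (f : {rmorphism k -> A}) (delta : A -> A) :
  (1 : A) = 0 -> isDer f delta -> isIder f delta.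
Proof.
move=> A_trivial delta_der; have all_eq (a b : A) : a = b.
  by rewrite -(mulr1 a) -(mulr1 b) A_trivial !mulr0.
split=> //; exists (fun _ x => x); split=> [|x]; last exact: all_eq.
by split=> //; split=> *; apply: all_eq.
Qed.

Theorem mainTheorem13 (k A : comPzRingType) (f : {rmorphism k -> A}) :
  theta_surjective f -> forall delta : A -> A, isDer f delta -> isIder f delta.
Proof.
move=> theta_surj delta delta_der.
have [/eqP A_trivial|A_nontrivial] := boolP ((1 : A) == 0).
  exact: isIder_trivial.
exact: isIder_nontrivial.
Qed.
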